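(* Let $A$ and $B$ be disjoint cubic graphs with $v(A)\equiv 2\pmod 6$ and $v(B)\equiv 4\pmod 6$, let $a=a_1a_2\in E(A)$ and $b=b_1b_2\in E(B)$, and suppose $B-b_1$ has no $\Lambda$-factor. Let $G=AabB$. Then $v(G)\equiv 0\pmod 6$ and $G$ has no $\Lambda$-factor avoiding the edge $a_2b_2$.
   Context: Graphs are finite, undirected, without loops or multiple edges; $v(G)=|V(G)|$. For disjoint graphs $A,B$ with $a=a_1a_2\in E(A)$, $b=b_1b_2\in E(B)$, $AabB$ is obtained from $(A-a)\cup(B-b)$ (edge deletions) by adding the new edges $a_1b_1$ and $a_2b_2$. $B-b_1$ denotes deletion of the vertex $b_1$. A $\Lambda$-factor of a graph is a spanning subgraph each of whose components is a path on 3 vertices; it avoids an edge $e$ if $e$ is not one of its edges. *)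

From mathcomp Require Import all_boot.
Set Implicit Arguments. Unset Strict Implicit. Unset Printing Implicit Defensive.

Definition simple_graph (T : finType) (e : rel T) : Prop :=
  symmetric e /\ irreflexive e.

Definition cubic (T : finType) (e : rel T) : Prop :=
  simple_graph e /\ forall x : T, #|[set y | e x y]| = 3.

(* The graph A a b B on the disjoint union TA + TB: delete a1a2 and b1b2,
   add a1b1 and a2b2. *)
Definition glue (TA TB : finType) (eA : rel TA) (eB : rel TB)
  (a1 a2 : TA) (b1 b2 : TB) : rel (TA + TB) :=
  fun u v => match u, v with
  | inl x, inl y => eA x y && ~~ (((x == a1) && (y == a2)) || ((x == a2) && (y == a1)))
  | inr x, inr y => eB x y && ~~ (((x == b1) && (y == b2)) || ((x == b2) && (y == b1)))
  | inl x, inr y => ((x == a1) && (y == b1)) || ((x == a2) && (y == b2))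
  | inr y, inl x => ((x == a1) && (y == b1)) || ((x == a2) && (y == b2))
  end.

Definition del_vertex (T : finType) (e : rel T) (v : T) : rel {x : T | x != v} :=
  fun x y => e (val x) (val y).
Arguments del_vertex {T} e v.

(* f is a Lambda-factor of the graph e: a spanning subgraph (edge relation f
   contained in e, symmetric) each of whose connected components is a path
   u - v - w on 3 distinct vertices. *)
Definition Lfactor (T : finType) (e f : rel T) : Prop :=
  symmetric f /\ subrel f e /\
  forall x : T, exists u v w : T,
    [/\ uniq [:: u; v; w],
        [set y | connect f x y] = [set u; v; w] &
        forall p q : T, p \in [set u; v; w] ->
          f p q = [|| (p == u) && (q == v), (p == v) && (q == u),
                      (p == v) && (q == w) | (p == w) && (q == v)]].

Definition has_Lfactor (T : finType) (e : rel T) : Prop :=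
  exists f : rel T, Lfactor e f.

(* Each component of a Λ-factor has three vertices, so every set of vertices
   closed under the factor has size divisible by 3.  If a Λ-factor f of AabB
   avoids a2b2, its only possible edge between the two sides is a1b1.  Hence
   the B-side minus the component D of b1 is f-closed, so the number of
   B-vertices in D is congruent to v(B), i.e. to 1 mod 3; as D has three
   vertices and contains b1, it meets the B-side in b1 alone.  The B-side
   minus b1 is then f-closed, and f restricts to a Λ-factor of B - b1. *)
From mathcomp Require Import all_boot zify.
Set Implicit Arguments. Unset Strict Implicit. Unset Printing Implicit Defensive.

Lemma card_set3 (T : finType) (u v w : T) :
  uniq [:: u; v; w] -> #|[set u; v; w]| = 3.
Proof.
rewrite /= !inE !andbT negb_or => /andP[/andP[uv uw] vw].
by rewrite -setUA cardsU1 cards2 !inE (negbTE uv) (negbTE uw) vw.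
Qed.

Lemma Lfactor_component_card (T : finType) (e f : rel T) (x : T) :
  Lfactor e f -> #|[set y | connect f x y]| = 3.
Proof. by move=> [_ [_ /(_ x) [u [v [w [uq -> _]]]]]]; exact: card_set3. Qed.

Lemma Lfactor_closed_card (T : finType) (e f : rel T) (S : {set T}) :
  Lfactor e f -> closed f S -> 3 %| #|S|.
Proof.
move=> hf clS; have cs := sym_connect_sym hf.1.
have eqv : {in S & &, equivalence_rel (connect f)}.
  by move=> x y z _ _ _; split=> // /(same_connect cs).
rewrite (card_partition (equivalence_partitionP eqv)).
apply: dvdn_sum => _ /imsetP[x xS ->].
suff -> : [set y in S | connect f x y] = [set y | connect f x y].
  by rewrite (Lfactor_component_card x hf).
by apply/setP => y; rewrite !inE andb_idl // => /(closed_connect clS) <-.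
Qed.

Lemma closedD (T : finType) (f : rel T) (S C : {set T}) :
  closed f C -> (forall x y, f x y -> x \notin C -> (x \in S) = (y \in S)) ->
  closed f (S :\: C).
Proof.
move=> clC clS x y fxy; rewrite !inE -(clC x y fxy).
by case: (boolP (x \in C)) => //= xC; rewrite (clS x y fxy xC).
Qed.

Lemma Lfactor_relpre (U T : finType) (e f : rel T) (h : U -> T) :
  injective h -> closed f (codom h) -> Lfactor e f ->
  Lfactor (relpre h e) (relpre h f).
Proof.
move=> injh clh [fs [fe fc]].
have fs' : symmetric (relpre h f) by move=> x y; exact: fs.
have connect_h x y : connect (relpre h f) x y = connect f (h x) (h y).
  have adj := strict_adjunction (sym_connect_sym fs')
                clh injh (subxx _) (fun _ _ _ => erefl).
  by rewrite (rel_functor adj) ?codom_f.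
split=> //; split=> [x y /fe // | x].
have [u [v [w [uq Cx pat]]]] := fc (h x).
have in_codom t : t \in [set u; v; w] -> exists t0, t = h t0.
  rewrite -Cx inE => /(closed_connect clh).
  by rewrite codom_f => /esym/codomP.
have [u0 eu] : exists u0, u = h u0 by apply: in_codom; rewrite !inE eqxx.
have [v0 ev] : exists v0, v = h v0 by apply: in_codom; rewrite !inE eqxx orbT.
have [w0 ew] : exists w0, w = h w0 by apply: in_codom; rewrite !inE eqxx orbT.
subst u v w; exists u0, v0, w0; split.
- by rewrite -(map_inj_uniq injh).
- apply/setP => y; move/setP/(_ (h y)): Cx.
  by rewrite !inE connect_h !(inj_eq injh).
- move=> p q pC; rewrite /= pat ?(inj_eq injh) //.
  by move: pC; rewrite !inE !(inj_eq injh).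
Qed.

Lemma Lfactor_subrel (T : finType) (e e' f : rel T) :
  subrel e e' -> Lfactor e f -> Lfactor e' f.
Proof. by move=> ee' [fs [fe fc]]; split=> //; split=> // x y /fe /ee'. Qed.

Section LfactorOfGlue.

Variables (TA TB : finType) (eA : rel TA) (eB : rel TB).
Variables (a1 a2 : TA) (b1 b2 : TB) (f : rel (TA + TB)).
Hypotheses (hf : Lfactor (glue eA eB a1 a2 b1 b2) f)
           (f_avoid : ~~ f (inl a2) (inr b2)).

Let R := [set inr y | y : TB] : {set TA + TB}.
Let D := [set t | connect f (inr b1) t].

Lemma glue_Lfactor_cross x y : f (inl x) (inr y) -> x = a1 /\ y = b1.
Proof.
move=> fxy; have /orP[] := hf.2.1 _ _ fxy; first by case/andP => /eqP -> /eqP ->.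
by case/andP => /eqP ex /eqP ey; move: f_avoid; rewrite -ex -ey fxy.
Qed.

Lemma in_right_side (t : TA + TB) : (t \in R) = (if t is inr _ then true else false).
Proof. by case: t => [x|y]; [apply/negbTE/imsetP => -[] | exact: imset_f]. Qed.

Lemma closed_right_side_minus_component : closed f (R :\: D).
Proof.
have fs := hf.1.
have clD : closed f D.
  by move=> x y fxy; rewrite !inE; apply: (connect_closed (sym_connect_sym fs)).
apply: closedD => // -[x|x] [y|y] fxy; rewrite !in_right_side // inE.
- have [ex ey] := glue_Lfactor_cross fxy; subst x y.
  by rewrite (connect1 (_ : f (inr b1) (inl a1))) // fs.
- by rewrite fs in fxy; have [_ ->] := glue_Lfactor_cross fxy; rewrite connect0.
Qed.

Lemma right_side_component : #|TB| %% 3 = 1 -> R :&: D = [set inr b1].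
Proof.
move=> hB; have b1RD : inr b1 \in R :&: D by rewrite inE in_right_side inE connect0.
have div3 := Lfactor_closed_card hf closed_right_side_minus_component.
have card_R : #|R| = #|TB| by rewrite card_imset //; exact: inr_inj.
have card_split := cardsID D R.
have RD_le3 : #|R :&: D| <= 3.
  by rewrite -(Lfactor_component_card (inr b1) hf) subset_leq_card ?subsetIr.
have RD_gt0 : 0 < #|R :&: D| by apply/card_gt0P; exists (inr b1).
apply/eqP; rewrite eq_sym eqEcard sub1set b1RD cards1 /=.
move: div3 card_split RD_le3 RD_gt0; rewrite card_R.
(* lia only treats the cardinals as shared atoms once they are named *)
set k := #|R :&: D|; set m := #|R :\: D|; lia.
Qed.

Lemma glue_Lfactor_restrict : #|TB| %% 3 = 1 -> has_Lfactor (del_vertex eB b1).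
Proof.
move=> hB; pose h (y : {y : TB | y != b1}) : TA + TB := inr (val y).
have codom_h t : (t \in codom h) = (t \in R :\: D).
  have /setP/(_ t) := right_side_component hB.
  case: t => [x|y]; rewrite !inE in_right_side /= ?andbF ?andbT.
    by move=> _; apply/negbTE/codomP => -[].
  rewrite (inj_eq inr_inj) => ->; apply/codomP/idP => [[[z zb] [->]] // | yb].
  by exists (exist _ y yb).
have clh : closed f (codom h).
  by move=> x y fxy; rewrite !codom_h; exact: closed_right_side_minus_component.
exists (relpre h f); apply: Lfactor_subrel (Lfactor_relpre _ clh hf).
- by move=> x y /andP[].
- by move=> x y [] /val_inj.
Qed.

End LfactorOfGlue.

(* The cubicity and edge hypotheses are only needed for the construction to
   make sense; the counting argument does not use them. *)
Theorem mainTheorem12 (TA TB : finType) (eA : rel TA) (eB : rel TB)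
  (a1 a2 : TA) (b1 b2 : TB) :
  cubic eA -> cubic eB ->
  #|TA| %% 6 = 2 -> #|TB| %% 6 = 4 ->
  eA a1 a2 -> eB b1 b2 ->
  ~ has_Lfactor (del_vertex eB b1) ->
  #|{: TA + TB}| %% 6 = 0 /\
  ~ (exists f : rel (TA + TB),
       Lfactor (glue eA eB a1 a2 b1 b2) f /\ ~~ f (inl a2) (inr b2)).
Proof.
move=> _ _ hA hB _ _ hnB; split; first by rewrite card_sum; lia.
move=> [f [hf f_avoid]]; apply: hnB; apply: (glue_Lfactor_restrict hf f_avoid).
lia.
Qed.
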